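(* Let $J\in\mathcal{D}(X)$, let $\ell$ be a positive integer, let $x\in X$, and let $\tilde u\in\tilde U(T^{\ell-1}J,x)$. Then $(T^\ell J)(f(x,\tilde u))\le(T^\ell J)(x)$.
   Context: Setting: $X$ (state space) and $U$ (control space) are sets; for each $x\in X$, $U(x)\subset U$ is nonempty; $f:X\times U\to X$; the stage cost $g$ satisfies $0\le g(x,u)\le\infty$ for all $x\in X$, $u\in U(x)$. $\mathcal{E}^+(X)$ denotes the set of all functions $J:X\to[0,\infty]$. The Bellman operator is $(TJ)(x)=\inf_{u\in U(x)}\{g(x,u)+J(f(x,u))\}$; $T^k$ is its $k$-fold composition, $T^0J=J$. The region of decreasing is $\mathcal{D}(X)=\{J\in\mathcal{E}^+(X): (TJ)(x)\le J(x)\ \forall x\in X\}$. For $J\in\mathcal{E}^+(X)$ and $x\in X$, $\tilde U(J,x)=\arg\min_{u\in U(x)}\{g(x,u)+J(f(x,u))\}$. Standing assumption: for every $J\in\mathcal{E}^+(X)$ and every $x\in X$, the infimum defining $(TJ)(x)$ is attained. *)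

From mathcomp Require Import all_boot all_order all_algebra.
From mathcomp Require Import all_classical all_reals ereal.
Set Implicit Arguments. Unset Strict Implicit. Unset Printing Implicit Defensive.
Import Order.TTheory GRing.Theory Num.Theory.
Local Open Scope classical_set_scope.
Local Open Scope ereal_scope.

Section Bellman.
Context {R : realType} {X U : Type}.
Variables (Uc : X -> set U) (f : X -> U -> X) (g : X -> U -> \bar R).

Definition nonnegfun (J : X -> \bar R) : Prop := forall x, 0 <= J x.

Definition bellman (J : X -> \bar R) : X -> \bar R :=
  fun x => ereal_inf [set g x u + J (f x u) | u in Uc x].

Definition bellman_iter (k : nat) (J : X -> \bar R) : X -> \bar R :=
  iter k bellman J.

Definition decreasing_region (J : X -> \bar R) : Prop :=
  nonnegfun J /\ forall x, bellman J x <= J x.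

Definition Utilde (J : X -> \bar R) (x : X) : set U :=
  [set u | Uc x u /\ forall v, Uc x v -> g x u + J (f x u) <= g x v + J (f x v)].
End Bellman.

(* Value iteration started in the region of decreasing is monotone:
   T^(k+1) J <= T^k J for every k, by monotonicity of T.  If u is a minimizer
   for T^(l-1) J at x, then, since stage costs are nonnegative,
   (T^(l-1) J)(f(x,u)) <= g(x,u) + (T^(l-1) J)(f(x,u)) = (T^l J)(x),
   and (T^l J)(f(x,u)) <= (T^(l-1) J)(f(x,u)) closes the chain. *)
From mathcomp Require Import all_boot all_order all_algebra.
From mathcomp Require Import all_classical all_reals ereal.
Set Implicit Arguments. Unset Strict Implicit. Unset Printing Implicit Defensive.
Import Order.TTheory GRing.Theory Num.Theory.
Local Open Scope classical_set_scope.
Local Open Scope ereal_scope.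

Section BellmanMonotonicity.
Context {R : realType} {X U : Type}.
Variables (Uc : X -> set U) (f : X -> U -> X) (g : X -> U -> \bar R).

Lemma le_bellman (J1 J2 : X -> \bar R) :
  (forall y, J1 y <= J2 y) -> forall y, bellman Uc f g J1 y <= bellman Uc f g J2 y.
Proof.
move=> le_J y; apply/ereal_infP => _ [u Uu <-].
apply: ge_ereal_inf; exists (g y u + J1 (f y u)); first by exists u.
exact: leeD2l.
Qed.

Lemma bellman_iterS_le (J : X -> \bar R) :
  (forall y, bellman Uc f g J y <= J y) ->
  forall k y, bellman_iter Uc f g k.+1 J y <= bellman_iter Uc f g k J y.
Proof.
move=> decJ; elim=> [|k IHk] y; first exact: decJ.
exact: le_bellman.
Qed.

Lemma Utilde_le_bellman (K : X -> \bar R) (x : X) (u : U) :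
  (forall y v, Uc y v -> 0 <= g y v) ->
  Utilde Uc f g K x u -> K (f x u) <= bellman Uc f g K x.
Proof.
move=> g_ge0 [Uu u_min]; apply/ereal_infP => _ [v Uv <-].
apply: le_trans (u_min v Uv).
by rewrite -[leLHS]add0e leeD2r // g_ge0.
Qed.

End BellmanMonotonicity.

Theorem corollary3 (R : realType) (X U : Type) (Uc : X -> set U)
  (f : X -> U -> X) (g : X -> U -> \bar R)
  (HU : forall x, Uc x !=set0)
  (Hg : forall x u, Uc x u -> 0 <= g x u)
  (Hattain : forall J : X -> \bar R, nonnegfun J -> forall x,
      exists2 u, Uc x u & g x u + J (f x u) = bellman Uc f g J x)
  (J : X -> \bar R) (HJ : decreasing_region Uc f g J)
  (l : nat) (Hl : (0 < l)%N) (x : X) (ut : U)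
  (Hut : Utilde Uc f g (bellman_iter Uc f g l.-1 J) x ut) :
  bellman_iter Uc f g l J (f x ut) <= bellman_iter Uc f g l J x.
Proof.
case: l Hl Hut => // l _ /= Hut.
apply: le_trans (bellman_iterS_le HJ.2 l (f x ut)) _.
exact: Utilde_le_bellman Hut.
Qed.
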